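(* Let $R$ be a finite group and let $\varphi$ be an automorphism of $R$ with $|R:C_R(\varphi)|=3$. Then one of the following holds: (1) $\frac14\left(|R|+|\mathbf{I}(R)|+|C_R(\varphi)|+|C_R(\varphi)^{-1}|\right)\le \mathbf{c}(R)-\frac{|R|}{96}$; (2) $R$ is abelian of exponent greater than $2$ and $\varphi=\iota$.
   Context: $\mathbf{I}(R)=\{x\in R\mid x^2=1\}$, $\mathbf{c}(R)=(|R|+|\mathbf{I}(R)|)/2$. For an automorphism $\varphi$: $C_R(\varphi)=\{x\in R\mid x^\varphi=x\}$ and $C_R(\varphi)^{-1}=\{x\in R\mid x^\varphi=x^{-1}\}$. $\iota:R\to R$ is the map $x\mapsto x^{-1}$. *)

From HB Require Import structures.
From mathcomp Require Import all_boot all_order all_algebra all_fingroup all_solvable.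
Set Implicit Arguments. Unset Strict Implicit. Unset Printing Implicit Defensive.

Local Open Scope group_scope.

Definition invols (gT : finGroupType) (R : {set gT}) : {set gT} :=
  [set x in R | x ^+ 2 == 1].

Definition fixC (gT : finGroupType) (phi : {perm gT}) (R : {set gT}) : {set gT} :=
  [set x in R | phi x == x].

Definition invC (gT : finGroupType) (phi : {perm gT}) (R : {set gT}) : {set gT} :=
  [set x in R | phi x == x^-1].

Definition cR (gT : finGroupType) (R : {set gT}) : rat :=
  ((#|R|%:R + #|invols R|%:R) / 2%:R)%R.

(* Write C = C_R(phi), J = C_R(phi)^-1 and K = J minus C.  As C and J meet inside
   I(R) and |R| = 3|C|, failure of (1) forces |K| > 15|C|/8.  Whenever x, y and
   yx lie in J, x and y commute.  For x in K, more than |C|/2 elements y of K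
   have yx in K; they all centralise x and lie in the one coset of C other
   than C and Cx^-1, so C_C(x) has more than |C|/2 elements, C centralises x,
   and as |R : C| = 3 is prime, x is central.  Hence Z(R), containing K, is
   more than half of R, so R is abelian; then J is a subgroup of more than
   half of R, so J = R, i.e. phi = iota, and exponent at most 2 would give
   I(R) = R, contradicting the count. *)

From HB Require Import structures.
From mathcomp Require Import all_boot all_order all_algebra all_fingroup all_solvable.
From mathcomp Require Import zify lra.
Set Implicit Arguments. Unset Strict Implicit. Unset Printing Implicit Defensive.
Import GRing.Theory Num.Theory.
Local Open Scope group_scope.

Section SubgroupCounting.
Variable gT : finGroupType.
Implicit Types (G H K : {group gT}) (A B D : {set gT}).

Lemma leq_cards_addI A B D :
  A \subset D -> B \subset D -> (#|A| + #|B| <= #|A :&: B| + #|D|)%N.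
Proof.
move=> sAD sBD; rewrite -cardsUI [X in (_ <= X)%N]addnC leq_add2r.
by rewrite subset_leq_card // subUset sAD.
Qed.

Lemma subgroup_over_half_eq G H : H \subset G -> (#|G| < 2 * #|H|)%N -> H :=: G.
Proof.
move=> sHG; rewrite -(Lagrange sHG) mulnC ltn_pmul2r // => lt_iGH.
by apply: index1g => //; apply/eqP; rewrite eqn_leq -ltnS lt_iGH indexg_gt0.
Qed.

Lemma prime_index_intermediate_eq G H K :
  K \subset H -> H \subset G -> prime #|G : K| -> ~~ (H \subset K) -> H :=: G.
Proof.
move=> sKH sHG /primeP[_ pr_iGK] not_sHK; apply: index1g => //.
have iHK1 : #|H : K| != 1%N by apply: contra not_sHK => /eqP/(index1g sKH) ->.
have dvd_iHK : (#|H : K| %| #|G : K|)%N by rewrite -(Lagrange_index sHG sKH) dvdn_mull.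
have /orP[/eqP iHK | /eqP iHK] := pr_iGK _ dvd_iHK; first by rewrite iHK in iHK1.
apply/eqP; rewrite -(eqn_pmul2r (indexg_gt0 G K)) mul1n.
by rewrite -{1}iHK (Lagrange_index sHG sKH).
Qed.

Lemma index3_same_rcoset G K x y d :
  #|G : K| = 3%N -> x \in G -> x \notin K ->
  y \in G -> y \notin K -> y * x \notin K ->
  d \in G -> d \notin K -> d * x \notin K -> y * d^-1 \in K.
Proof.
move=> iGK xG xK yG yK yxK dG dK dxK.
have rcoset_eq z w : (K :* z == K :* w) = (z * w^-1 \in K).
  apply/eqP/idP => [eKzw|?]; first by rewrite -mem_rcoset -eKzw rcoset_refl.
  by apply/rcoset_eqP; rewrite mem_rcoset.
have rcosetG z : z \in G -> K :* z \in rcosets K G.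
  by move=> zG; apply/rcosetsP; exists z.
set T := K :* y |: [set K :* 1; K :* x^-1].
have sTG : T \subset rcosets K G.
  by apply/subsetP => z; rewrite !inE => /or3P[] /eqP->; rewrite rcosetG ?groupV.
have cardT : #|T| = 3%N.
  rewrite /T cardsU1 cards2 in_set2 !rcoset_eq.
  by rewrite invg1 mulg1 invgK mul1g xK (negPf yK) (negPf yxK).
have defT : T = rcosets K G.
  by apply/eqP; rewrite eqEcard sTG cardT -iGK; apply: leqnn.
have := rcosetG d dG; rewrite -defT !inE !rcoset_eq invg1 mulg1 invgK.
by rewrite (negPf dK) (negPf dxK) !orbF -groupV invMg invgK.
Qed.

End SubgroupCounting.

Section InvertedElements.
Variables (gT : finGroupType) (R : {group gT}) (phi : {perm gT}).
Hypothesis AutR_phi : phi \in Aut R.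

Let phi1 : phi 1 = 1.
Proof. by rewrite -(autmE AutR_phi) morph1. Qed.

Let phiM : {in R &, {morph phi : x y / x * y}}.
Proof. by move=> x y xR yR; rewrite -(autmE AutR_phi) morphM. Qed.

Lemma fixC_group_set : group_set (fixC phi R).
Proof.
apply/group_setP; split=> [|x y]; first by rewrite inE group1 phi1 eqxx.
rewrite !inE => /andP[xR /eqP phix] /andP[yR /eqP phiy].
by rewrite groupM // phiM // phix phiy eqxx.
Qed.

Lemma invC_group_set : abelian R -> group_set (invC phi R).
Proof.
move=> cRR; apply/group_setP; split=> [|x y]; first by rewrite inE group1 phi1 invg1 eqxx.
rewrite !inE => /andP[xR /eqP phix] /andP[yR /eqP phiy].
by rewrite groupM // phiM // phix phiy invMg (centsP cRR _ (groupVr xR) _ (groupVr yR)) eqxx.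
Qed.

Lemma fixC_invC_sub_invols : fixC phi R :&: invC phi R \subset invols R.
Proof.
apply/subsetP => x; rewrite !inE => /andP[/andP[xR /eqP phix] /andP[_ /eqP phixV]].
by rewrite xR expgS expg1 -{2}phix phixV mulgV eqxx.
Qed.

Lemma card_invC_le :
  (#|invC phi R| <= #|invols R| + #|invC phi R :\: fixC phi R|)%N.
Proof.
rewrite -(cardsID (fixC phi R) (invC phi R)) leq_add2r setIC.
exact/subset_leq_card/fixC_invC_sub_invols.
Qed.

Lemma invC_commute x y :
  x \in invC phi R -> y \in invC phi R -> x * y \in invC phi R -> commute x y.
Proof.
rewrite !inE => /andP[xR /eqP phix] /andP[yR /eqP phiy] /andP[_ /eqP].
by rewrite phiM // phix phiy -invMg => /invg_inj/esym.
Qed.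

End InvertedElements.

Section IndexThreeSubgroup.
Variables (gT : finGroupType) (R C : {group gT}) (phi : {perm gT}).
Hypotheses (AutR_phi : phi \in Aut R) (sCR : C \subset R) (iRC : #|R : C| = 3%N).
Local Notation K := (invC phi R :\: C).

Lemma index3_invC_central x : (7 * #|C| < 4 * #|K|)%N -> x \in K -> R \subset 'C[x].
Proof.
move=> bigK xK.
have memK y : y \in K = [&& y \notin C, y \in R & phi y == y^-1] by rewrite !inE.
have sKR : K \subset R by apply/subsetP => y; rewrite memK => /and3P[].
have [xJ xC] := setDP xK.
have xR : x \in R := subsetP sKR x xK.
set S := K :&: K :* x^-1.
have memS y : (y \in S) = (y \in K) && (y * x \in K) by rewrite inE mem_rcoset invgK.
have sKxR : K :* x^-1 \subset R.
  apply/subsetP => z; rewrite mem_rcoset invgK => /(subsetP sKR) zxR.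
  by rewrite -(mulgK x z) groupM ?groupV.
have := leq_cards_addI sKR sKxR; rewrite -/S card_rcoset -(Lagrange sCR) iRC => cardS.
have ltCS : (#|C| < 2 * #|S|)%N by lia.
have [d dS] : exists d, d \in S by apply/set0Pn; rewrite -card_gt0; lia.
have sSC : S \subset 'C[x].
  apply/subsetP => y; rewrite memS => /andP[/setDP[yJ _] /setDP[yxJ _]].
  exact/cent1P/(invC_commute AutR_phi yJ xJ yxJ).
(* S avoids the cosets C and C x^-1, hence lies in the single coset C d. *)
have sSdCC : S :* d^-1 \subset 'C_C[x].
  apply/subsetP => z; rewrite mem_rcoset invgK => zdS.
  rewrite -(mulgK d z) inE [_ \in 'C[x]]groupM ?groupV ?(subsetP sSC) // andbT.
  move: zdS dS; rewrite !memS !memK => /andP[/and3P[yC yR _] /and3P[yxC _ _]].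
  case/andP=> /and3P[dC dR _] /and3P[dxC _ _].
  exact: index3_same_rcoset iRC xR xC yR yC yxC dR dC dxC.
have defCC : 'C_C[x] = C.
  apply: subgroup_over_half_eq; first exact: subsetIl.
  by apply: (leq_trans ltCS); rewrite leq_mul2l -(card_rcoset _ d^-1) subset_leq_card.
have defCR : 'C_R[x] = R.
  apply: (prime_index_intermediate_eq (K := C)); rewrite ?subsetIl ?iRC //.
    by rewrite subsetI sCR -defCC subsetIr.
  by apply/subsetPn; exists x; rewrite // inE xR cent1id.
by rewrite -defCR subsetIr.
Qed.

End IndexThreeSubgroup.

Lemma invols_exponent_le2 (gT : finGroupType) (G : {group gT}) :
  (exponent G <= 2)%N -> invols G = G.
Proof.
move=> leG2; have eG2 : (exponent G %| 2)%N.
  by case: (exponent G) (exponent_gt0 G) leG2 => [|[|[|]]].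
apply/setP => x; rewrite inE; case: (boolP (x \in G)) => //= xG.
by rewrite (exponentP eG2 x xG) eqxx.
Qed.

Lemma mean4_le_half_sub_96th (F : realFieldType) (n i c j : nat) :
  n = (c * 3)%N -> (8 * j <= 15 * c + 8 * i)%N ->
  ((n%:R + i%:R + c%:R + j%:R) / 4%:R <= (n%:R + i%:R) / 2%:R - n%:R / 96%:R :> F)%R.
Proof. by move=> ->; rewrite -(ler_nat F) !natrD !natrM => ?; lra. Qed.

Local Close Scope group_scope.

Theorem lemma2p3 (gT : finGroupType) (R : {group gT}) (phi : {perm gT})
  (hphi : phi \in Aut R)
  (hidx : #|R : fixC phi R|%g = 3%N) :
  (((#|R|%:R + #|invols R|%:R + #|fixC phi R|%:R + #|invC phi R|%:R) / 4%:R
     <= cR R - #|R|%:R / 96%:R :> rat)%R)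
  \/ (abelian R /\ (2 < exponent R)%N /\ {in R, forall x, phi x = x^-1%g}).
Proof.
pose C := Group (fixC_group_set hphi).
have sCR : C \subset R by apply/subsetP => x /setIdP[].
have sJR : invC phi R \subset R by apply/subsetP => x /setIdP[].
have oR : #|R| = (#|C| * 3)%N by rewrite -hidx Lagrange.
have [small_J | big_J] := leqP (8 * #|invC phi R|) (15 * #|C| + 8 * #|invols R|).
  by left; apply: mean4_le_half_sub_96th.
right; set K := invC phi R :\: C.
have bigK : (15 * #|C| < 8 * #|K|)%N by have := card_invC_le R phi; rewrite -/K; lia.
have ltRK : (#|R| < 2 * #|K|)%N by lia.
have sKR : K \subset R := subset_trans (subsetDl _ _) sJR.
have sKZ : K \subset 'Z(R)%g.
  apply/subsetP => x xK; rewrite in_setI (subsetP sKR) // -sub_cent1.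
  by apply: (index3_invC_central hphi sCR hidx _ xK); rewrite -/K; lia.
have cRR : abelian R.
  apply/center_idP/subgroup_over_half_eq; first exact: center_sub.
  by rewrite (leq_trans ltRK) // leq_mul2l subset_leq_card.
have defJ : invC phi R = R.
  apply: (subgroup_over_half_eq (H := Group (invC_group_set hphi cRR))) => //=.
  by rewrite (leq_trans ltRK) // leq_mul2l subset_leq_card ?subsetDl.
split=> //; split; last by move=> x; rewrite -{1}defJ => /setIdP[_ /eqP].
rewrite ltnNge; apply: contraL big_J => /invols_exponent_le2 ->.
by rewrite -leqNgt addnC (leq_trans _ (leq_addr _ _)) // leq_mul2l subset_leq_card.
Qed.
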